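(* Let $N\ge1$, $d_1,d_2,d_3,d_4\ge1$, $\kappa_1,\kappa_2\ge0$, and for $1\le j\le N$ let $B_j\in\mathbb C^{d_1\times d_2\times d_1\times d_2}$, $C_j\in\mathbb C^{d_3\times d_4\times d_3\times d_4}$ satisfy $[B_j]_{\alpha_1\beta_1\alpha_2\beta_2}=-\overline{[B_j]_{\alpha_2\beta_2\alpha_1\beta_1}}$ and $[C_j]_{\gamma_1\delta_1\gamma_2\delta_2}=-\overline{[C_j]_{\gamma_2\delta_2\gamma_1\delta_1}}$. Define $A_j\in\mathbb C^{d_1\times d_2\times d_3\times d_4\times d_1\times d_2\times d_3\times d_4}$ by $$[A_j]_{\alpha_1\beta_1\gamma_1\delta_1\alpha_2\beta_2\gamma_2\delta_2}=[B_j]_{\alpha_1\beta_1\alpha_2\beta_2}\delta_{\gamma_1\gamma_2}\delta_{\delta_1\delta_2}+[C_j]_{\gamma_1\delta_1\gamma_2\delta_2}\delta_{\alpha_1\alpha_2}\delta_{\beta_1\beta_2},$$ and take in the Lohe tensor model (rank $4$) the couplings $\kappa_{(0,1,1,1)}=\kappa_{(1,1,0,1)}=\kappa_1$, $\kappa_{(1,0,1,1)}=\kappa_{(1,1,1,0)}=\kappa_2$, and $\kappa_{i_*}=0$ for all other $i_*\in\{0,1\}^4$. Then: (1) If $\{(U_i,V_i)\}$ is a solution of the double matrix model (with these $B_j,C_j,\kappa_1,\kappa_2$), then $T_i(t):=U_i(t)\otimes V_i(t)$ is a (quadratically separable) solution of the Lohe tensor model with free flow tensors $A_i$. (2) If $\{T_i\}$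 is a solution of the Lohe tensor model with free flow tensors $A_i$ and initial data $T_i(0)=U_i^0\otimes V_i^0$, where $U_i^0\in\mathbb C^{d_1\times d_2}$, $V_i^0\in\mathbb C^{d_3\times d_4}$ have $\|U_i^0\|_F=\|V_i^0\|_F=1$, then there exist matrices $U_i(t)\in\mathbb C^{d_1\times d_2}$, $V_i(t)\in\mathbb C^{d_3\times d_4}$ of unit Frobenius norm with $T_i(t)=U_i(t)\otimes V_i(t)$ for all $t>0$, where $\{(U_i,V_i)\}$ is the solution of the double matrix model with $(U_i,V_i)(0)=(U_i^0,V_i^0)$.
   Context: $\langle A,B\rangle_F=\mathrm{tr}(A^\dagger B)$, $\|A\|_F=\sqrt{\langle A,A\rangle_F}$; $(U\otimes V)$ is the rank-4 tensor with $[U\otimes V]_{\alpha\beta\gamma\delta}=[U]_{\alpha\beta}[V]_{\gamma\delta}$. Repeated indices are summed. Double matrix model: for $U_j\in\mathbb C^{d_1\times d_2}$, $V_j\in\mathbb C^{d_3\times d_4}$, $\dot U_j=B_jU_j+\frac{\kappa_1}{N}\sum_k(\langle V_j,V_k\rangle_FU_kU_j^\dagger U_j-\langle V_k,V_j\rangle_FU_jU_k^\dagger U_j)+\frac{\kappa_2}{N}\sum_k(\langle V_j,V_k\rangle_FU_jU_j^\dagger U_k-\langle V_k,V_j\rangle_FU_jU_k^\dagger U_j)$, $\dot V_j=C_jV_j+\frac{\kappa_1}{N}\sum_k(\langle U_j,U_k\rangle_FV_kV_j^\dagger V_j-\langle U_k,U_j\rangle_FV_jV_k^\dagger V_j)+\frac{\kappa_2}{N}\sum_k(\langle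 U_j,U_k\rangle_FV_jV_j^\dagger V_k-\langle U_k,U_j\rangle_FV_jV_k^\dagger V_j)$, where $[B_jU_j]_{\alpha\beta}=[B_j]_{\alpha\beta\gamma\delta}[U_j]_{\gamma\delta}$, $[C_jV_j]_{\alpha\beta}=[C_j]_{\alpha\beta\gamma\delta}[V_j]_{\gamma\delta}$. Lohe tensor model for rank-$r$ tensors $T_j\in\mathbb C^{e_1\times\cdots\times e_r}$: for $i_*=(i_1,\dots,i_r)\in\{0,1\}^r$ write $\alpha_{*i_*}=(\alpha_{1i_1},\dots,\alpha_{ri_r})$, $\alpha_{*(1-i_* )}=(\alpha_{1(1-i_1)},\dots,\alpha_{r(1-i_r)})$, $\alpha_{*0},\alpha_{*1}$ similarly; with $T_c=\frac1N\sum_kT_k$, nonnegative couplings $\kappa_{i_*}$, and rank-$2r$ tensors $A_j$ with $\overline{[A_j]_{\alpha_{*0}\alpha_{*1}}}=-[A_j]_{\alpha_{*1}\alpha_{*0}}$, $\frac{d}{dt}[T_j]_{\alpha_{*0}}=[A_j]_{\alpha_{*0}\alpha_{*1}}[T_j]_{\alpha_{*1}}+\sum_{i_*\in\{0,1\}^r}\kappa_{i_*}\big([T_c]_{\alpha_{*i_*}}\overline{[T_j]_{\alpha_{*1}}}[T_j]_{\alpha_{*(1-i_* )}}-[T_j]_{\alpha_{*i_*}}\overline{[T_c]_{\alpha_{*1}}}[T_j]_{\alpha_{*(1-i_* )}}\big)$, summing over the indices $\alpha_{*1}$. A quadratically separable state is a solution of the form $T_i=U_i^1\otimes\cdots\otimes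 U_i^m$ with matrices $U_i^k$ of unit Frobenius norm. *)

From mathcomp Require Import all_boot all_order all_algebra.
From mathcomp Require Import reals topology normedtype derive.
From mathcomp Require Export complex.
Import Order.TTheory GRing.Theory Num.Theory.
Import numFieldNormedType.Exports.

Set Implicit Arguments.
Unset Strict Implicit.
Unset Printing Implicit Defensive.

Local Open Scope classical_set_scope.
Local Open Scope ring_scope.

Section Defs.
Variable R : realType.
Local Notation C := R[i].

Definition cderiv (f : R -> C) (t : R) (z : C) : Prop :=
  is_derive t (1 : R) (fun s => complex.Re (f s)) (complex.Re z) /\
  is_derive t (1 : R) (fun s => complex.Im (f s)) (complex.Im z).

Definition ccont0 (f : R -> C) : Prop :=
  (fun s => complex.Re (f s)) x @[x --> 0^'+] --> complex.Re (f 0) /\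
  (fun s => complex.Im (f s)) x @[x --> 0^'+] --> complex.Im (f 0).

Definition adjmx m n (A : 'M[C]_(m, n)) : 'M[C]_(n, m) :=
  \matrix_(i, j) Num.conj (A j i).

Definition frob m n (A B : 'M[C]_(m, n)) : C := \tr (adjmx A *m B).

Definition frob_norm m n (A : 'M[C]_(m, n)) : R :=
  Num.sqrt (complex.Re (frob A A)).

Definition tapp m n (B : 'I_m -> 'I_n -> 'I_m -> 'I_n -> C) (U : 'M[C]_(m, n))
  : 'M[C]_(m, n) :=
  \matrix_(a, b) \sum_(c < m) \sum_(d < n) B a b c d * U c d.

Definition dmm_rhs N m n p q (B : 'I_N -> 'I_m -> 'I_n -> 'I_m -> 'I_n -> C)
  (k1 k2 : R) (U : 'I_N -> 'M[C]_(m, n)) (V : 'I_N -> 'M[C]_(p, q)) (j : 'I_N)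
  : 'M[C]_(m, n) :=
  tapp (B j) (U j)
  + ((k1%:C)%C / N%:R) *: \sum_(k < N)
      (frob (V j) (V k) *: (U k *m adjmx (U j) *m U j)
       - frob (V k) (V j) *: (U j *m adjmx (U k) *m U j))
  + ((k2%:C)%C / N%:R) *: \sum_(k < N)
      (frob (V j) (V k) *: (U j *m adjmx (U j) *m U k)
       - frob (V k) (V j) *: (U j *m adjmx (U k) *m U j)).

Definition dmm_solution N d1 d2 d3 d4
  (B : 'I_N -> 'I_d1 -> 'I_d2 -> 'I_d1 -> 'I_d2 -> C)
  (Cj : 'I_N -> 'I_d3 -> 'I_d4 -> 'I_d3 -> 'I_d4 -> C) (k1 k2 : R)
  (U : 'I_N -> R -> 'M[C]_(d1, d2)) (V : 'I_N -> R -> 'M[C]_(d3, d4)) : Prop :=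
  (forall (j : 'I_N) (a : 'I_d1) (b : 'I_d2),
     ccont0 (fun s => U j s a b) /\
     forall t : R, 0 < t ->
       cderiv (fun s => U j s a b) t
         (dmm_rhs B k1 k2 (fun k => U k t) (fun k => V k t) j a b)) /\
  (forall (j : 'I_N) (c : 'I_d3) (d : 'I_d4),
     ccont0 (fun s => V j s c d) /\
     forall t : R, 0 < t ->
       cderiv (fun s => V j s c d) t
         (dmm_rhs Cj k1 k2 (fun k => V k t) (fun k => U k t) j c d)).

Definition tensor4 d1 d2 d3 d4 := 'I_d1 -> 'I_d2 -> 'I_d3 -> 'I_d4 -> C.
Definition tensor8 d1 d2 d3 d4 :=
  'I_d1 -> 'I_d2 -> 'I_d3 -> 'I_d4 -> 'I_d1 -> 'I_d2 -> 'I_d3 -> 'I_d4 -> C.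

Definition mxtensor d1 d2 d3 d4 (U : 'M[C]_(d1, d2)) (V : 'M[C]_(d3, d4))
  : tensor4 d1 d2 d3 d4 :=
  fun a b c d => U a b * V c d.

(** alpha_{r i_r}: index a (i_r = 0) or summation index b (i_r = 1). *)
Definition sel (T : Type) (i : bool) (a b : T) : T := if i then b else a.

(** Right-hand side of the rank-4 Lohe tensor model, at free index
    alpha_{*0} = (a1,a2,a3,a4), summing over alpha_{*1} = (b1,b2,b3,b4). *)
Definition lohe_rhs N d1 d2 d3 d4 (A : 'I_N -> tensor8 d1 d2 d3 d4)
  (kappa : bool -> bool -> bool -> bool -> R)
  (T : 'I_N -> tensor4 d1 d2 d3 d4) (j : 'I_N)
  (a1 : 'I_d1) (a2 : 'I_d2) (a3 : 'I_d3) (a4 : 'I_d4) : C :=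
  let Tc : tensor4 d1 d2 d3 d4 :=
    fun b1 b2 b3 b4 => N%:R^-1 * \sum_(k < N) T k b1 b2 b3 b4 in
  \sum_(b1 < d1) \sum_(b2 < d2) \sum_(b3 < d3) \sum_(b4 < d4)
     A j a1 a2 a3 a4 b1 b2 b3 b4 * T j b1 b2 b3 b4
  + \sum_(i1 : bool) \sum_(i2 : bool) \sum_(i3 : bool) \sum_(i4 : bool)
     ((kappa i1 i2 i3 i4)%:C)%C *
     \sum_(b1 < d1) \sum_(b2 < d2) \sum_(b3 < d3) \sum_(b4 < d4)
       (Tc (sel i1 a1 b1) (sel i2 a2 b2) (sel i3 a3 b3) (sel i4 a4 b4)
          * Num.conj (T j b1 b2 b3 b4)
          * T j (sel (~~ i1) a1 b1) (sel (~~ i2) a2 b2)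
                (sel (~~ i3) a3 b3) (sel (~~ i4) a4 b4)
        - T j (sel i1 a1 b1) (sel i2 a2 b2) (sel i3 a3 b3) (sel i4 a4 b4)
          * Num.conj (Tc b1 b2 b3 b4)
          * T j (sel (~~ i1) a1 b1) (sel (~~ i2) a2 b2)
                (sel (~~ i3) a3 b3) (sel (~~ i4) a4 b4)).

Definition lohe_solution N d1 d2 d3 d4 (A : 'I_N -> tensor8 d1 d2 d3 d4)
  (kappa : bool -> bool -> bool -> bool -> R)
  (T : 'I_N -> R -> tensor4 d1 d2 d3 d4) : Prop :=
  forall (j : 'I_N) (a1 : 'I_d1) (a2 : 'I_d2) (a3 : 'I_d3) (a4 : 'I_d4),
    ccont0 (fun s => T j s a1 a2 a3 a4) /\
    forall t : R, 0 < t ->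
      cderiv (fun s => T j s a1 a2 a3 a4) t
        (lohe_rhs A kappa (fun k => T k t) j a1 a2 a3 a4).

Definition free_flow d1 d2 d3 d4
  (B : 'I_d1 -> 'I_d2 -> 'I_d1 -> 'I_d2 -> C)
  (Cj : 'I_d3 -> 'I_d4 -> 'I_d3 -> 'I_d4 -> C) : tensor8 d1 d2 d3 d4 :=
  fun a1 b1 g1 e1 a2 b2 g2 e2 =>
    B a1 b1 a2 b2 * (g1 == g2)%:R * (e1 == e2)%:R
    + Cj g1 e1 g2 e2 * (a1 == a2)%:R * (b1 == b2)%:R.

Definition dmm_kappa (k1 k2 : R) (i1 i2 i3 i4 : bool) : R :=
  match i1, i2, i3, i4 with
  | false, true, true, true => k1
  | true, true, false, true => k1
  | true, false, true, true => k2
  | true, true, true, false => k2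
  | _, _, _, _ => 0
  end.

End Defs.

(* For product tensors T_k = U_k (x) V_k the Lohe vector field factorises.  The
   free flow A_j acts as B_j (x) 1 + 1 (x) C_j, and the coupling term with
   multi-index (i1, i2, i3, i4) is the average over k of a contraction of the U's
   with pattern (i1, i2) times a contraction of the V's with pattern (i3, i4).
   For the four couplings used here one factor is <V_j, V_k>_F V_j (resp.
   <U_j, U_k>_F U_j) and the other is an interaction term of the double matrix
   model, so the Lohe field at U (x) V is U' (x) V + U (x) V' and (1) is the
   product rule.
   For (2), the Lohe field is polynomial in the entries and their conjugates,
   hence locally Lipschitz, and a Gronwall estimate on the squared distance shows
   that a solution is determined by its initial data: T = U (x) V.  The Frobenius
   norms are conserved because <U_j, U_j'>_F is purely imaginary: B_j is
   skew-Hermitian and each interaction term contributes c w - conj (c w). *)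

From mathcomp Require Import all_boot all_order all_algebra.
From mathcomp Require Import reals topology normedtype derive.
From mathcomp Require Import complex.
From mathcomp Require Import boolp classical_sets realfun sequences exp.
From mathcomp Require Import ring lra.
Import Order.TTheory GRing.Theory Num.Theory.
Import numFieldNormedType.Exports.

Set Implicit Arguments.
Unset Strict Implicit.
Unset Printing Implicit Defensive.

Local Open Scope ring_scope.
Local Open Scope classical_set_scope.

Section ComplexNorms.
Variable R : realType.
Local Notation C := R[i].
Implicit Types z w : C.

(* The l1 norm avoids square roots; any norm on C would do. *)
Definition normc1 z : R := `|complex.Re z| + `|complex.Im z|.

Definition sqrnormc z : R := complex.Re z ^+ 2 + complex.Im z ^+ 2.

Lemma normc1_ge0 z : 0 <= normc1 z.
Proof. by rewrite addr_ge0. Qed.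

Lemma normc1_0 : normc1 0 = 0.
Proof. by rewrite /normc1 normr0 addr0. Qed.

Lemma normc1N z : normc1 (- z) = normc1 z.
Proof. by rewrite /normc1 !raddfN !normrN. Qed.

Lemma normc1_conj z : normc1 (Num.conj z) = normc1 z.
Proof. by case: z => a b; rewrite /normc1 /= normrN. Qed.

Lemma normc1D z w : normc1 (z + w) <= normc1 z + normc1 w.
Proof.
rewrite /normc1 !raddfD /=.
have := ler_normD (complex.Re z) (complex.Re w).
by have := ler_normD (complex.Im z) (complex.Im w); lra.
Qed.

Lemma normc1M z w : normc1 (z * w) <= normc1 z * normc1 w.
Proof.
case: z => a b; case: w => c d; rewrite /normc1 /=.
have := ler_normB (a * c) (b * d); have := ler_normD (a * d) (b * c).
rewrite !normrM.
have := normr_ge0 a; have := normr_ge0 b; have := normr_ge0 c; have := normr_ge0 d.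
nra.
Qed.

Lemma ReM (z w : C) :
  complex.Re (z * w) = complex.Re z * complex.Re w - complex.Im z * complex.Im w.
Proof. by case: z => a b; case: w. Qed.

Lemma ImM (z w : C) :
  complex.Im (z * w) = complex.Re z * complex.Im w + complex.Im z * complex.Re w.
Proof. by case: z => a b; case: w. Qed.

Lemma ReD (z w : C) : complex.Re (z + w) = complex.Re z + complex.Re w.
Proof. by case: z; case: w. Qed.

Lemma ImD (z w : C) : complex.Im (z + w) = complex.Im z + complex.Im w.
Proof. by case: z; case: w. Qed.

Lemma Re_realM (a : R) z : complex.Re ((a%:C)%C * z) = a * complex.Re z.
Proof. by case: z => x y /=; rewrite mul0r subr0. Qed.

Lemma Re_conjM z w :
  complex.Re (Num.conj z * w) =
  complex.Re z * complex.Re w + complex.Im z * complex.Im w.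
Proof. by case: z => a b; case: w => c d /=; ring. Qed.

Lemma Re_conjM_le z w : complex.Re (Num.conj z * w) <= normc1 z * normc1 w.
Proof.
rewrite Re_conjM /normc1.
have := ler_norm (complex.Re z * complex.Re w).
have := ler_norm (complex.Im z * complex.Im w).
rewrite !normrM.
have := normr_ge0 (complex.Re z); have := normr_ge0 (complex.Im z).
have := normr_ge0 (complex.Re w); have := normr_ge0 (complex.Im w).
nra.
Qed.

Lemma sqrnormcE z : sqrnormc z = complex.Re (Num.conj z * z).
Proof. by rewrite Re_conjM /sqrnormc !expr2. Qed.

Lemma sqrnormc_ge0 z : 0 <= sqrnormc z.
Proof. by rewrite addr_ge0 ?sqr_ge0. Qed.

Lemma sqrnormc_eq0 z : (sqrnormc z == 0) = (z == 0).
Proof.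
case: z => a b; rewrite /sqrnormc paddr_eq0 ?sqr_ge0 // !sqrf_eq0 /=.
by rewrite eq_complex.
Qed.

Lemma sqr_normc1_le z : normc1 z ^+ 2 <= 2 * sqrnormc z.
Proof.
rewrite /normc1 /sqrnormc -(real_normK (num_real (complex.Re z))).
rewrite -(real_normK (num_real (complex.Im z))).
have := sqr_ge0 (`|complex.Re z| - `|complex.Im z|); nra.
Qed.

End ComplexNorms.

Section NestedSums.
Variables (K : comPzRingType) (T1 T2 T3 T4 : finType).

Lemma sum4_pair (F : T1 -> T2 -> T3 -> T4 -> K) :
  \sum_b1 \sum_b2 \sum_b3 \sum_b4 F b1 b2 b3 b4
  = \sum_(b : T1 * T2 * T3 * T4) F b.1.1.1 b.1.1.2 b.1.2 b.2.
Proof. by rewrite !pair_bigA. Qed.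

Lemma sum4D (f g : T1 -> T2 -> T3 -> T4 -> K) :
  \sum_b1 \sum_b2 \sum_b3 \sum_b4 (f b1 b2 b3 b4 + g b1 b2 b3 b4)
  = \sum_b1 \sum_b2 \sum_b3 \sum_b4 f b1 b2 b3 b4
    + \sum_b1 \sum_b2 \sum_b3 \sum_b4 g b1 b2 b3 b4.
Proof. by rewrite !sum4_pair big_split. Qed.

Lemma sum4_mul (f : T1 -> T2 -> K) (g : T3 -> T4 -> K) :
  \sum_b1 \sum_b2 \sum_b3 \sum_b4 (f b1 b2 * g b3 b4)
  = (\sum_b1 \sum_b2 f b1 b2) * (\sum_b3 \sum_b4 g b3 b4).
Proof.
rewrite big_distrl; apply: eq_bigr => b1 _; rewrite big_distrl.
apply: eq_bigr => b2 _; rewrite big_distrr; apply: eq_bigr => b3 _.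
by rewrite big_distrr.
Qed.

Lemma sum4_swap (F : T1 -> T2 -> T1 -> T2 -> K) :
  \sum_a \sum_b \sum_c \sum_d F a b c d = \sum_a \sum_b \sum_c \sum_d F c d a b.
Proof.
pose swap (p : T1 * T2 * T1 * T2) := (p.1.2, p.2, p.1.1.1, p.1.1.2).
have swapK : involutive swap by case=> [[[]]].
by rewrite !pair_bigA (reindex_inj (inv_inj swapK)).
Qed.

Lemma sum_delta (I : finType) (a : I) (f : I -> K) : \sum_b (a == b)%:R * f b = f a.
Proof.
rewrite (bigD1 a) //= eqxx mul1r big1 ?addr0 // => b.
by rewrite eq_sym => /negbTE ->; rewrite mul0r.
Qed.

Lemma sum_delta2 (a1 : T1) (a2 : T2) (F : T1 -> T2 -> K) :
  \sum_b1 \sum_b2 (a1 == b1)%:R * ((a2 == b2)%:R * F b1 b2) = F a1 a2.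
Proof. by under eq_bigr do rewrite -mulr_sumr sum_delta; rewrite sum_delta. Qed.

End NestedSums.

(** * The Lohe vector field at product tensors *)

Section TensorAlgebra.
Variable R : realType.
Local Notation C := R[i].
Variables d1 d2 d3 d4 : nat.
Local Notation tensor4 := (tensor4 R d1 d2 d3 d4).

Definition contract2 m n (i1 i2 : bool) (X Y Z : 'M[C]_(m, n)) a1 a2 : C :=
  \sum_(b1 < m) \sum_(b2 < n)
    X (sel i1 a1 b1) (sel i2 a2 b2) * Num.conj (Y b1 b2)
    * Z (sel (~~ i1) a1 b1) (sel (~~ i2) a2 b2).

Definition contract4 (i1 i2 i3 i4 : bool) (X Y Z : tensor4) a1 a2 a3 a4 : C :=
  \sum_(b1 < d1) \sum_(b2 < d2) \sum_(b3 < d3) \sum_(b4 < d4)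
    X (sel i1 a1 b1) (sel i2 a2 b2) (sel i3 a3 b3) (sel i4 a4 b4)
    * Num.conj (Y b1 b2 b3 b4)
    * Z (sel (~~ i1) a1 b1) (sel (~~ i2) a2 b2)
        (sel (~~ i3) a3 b3) (sel (~~ i4) a4 b4).

Definition centroid N (T : 'I_N -> tensor4) : tensor4 :=
  fun b1 b2 b3 b4 => N%:R^-1 * \sum_(k < N) T k b1 b2 b3 b4.

Lemma contract2_01 m n (X Y Z : 'M[C]_(m, n)) a1 a2 :
  contract2 false true X Y Z a1 a2 = (X *m adjmx Y *m Z) a1 a2.
Proof.
rewrite mxE; apply: eq_bigr => b1 _; rewrite mxE big_distrl.
by apply: eq_bigr => b2 _; rewrite mxE.
Qed.

Lemma contract2_10 m n (X Y Z : 'M[C]_(m, n)) a1 a2 :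
  contract2 true false X Y Z a1 a2 = (Z *m adjmx Y *m X) a1 a2.
Proof.
rewrite mxE; apply: eq_bigr => b1 _; rewrite mxE big_distrl.
by apply: eq_bigr => b2 _; rewrite /adjmx mxE /=; ring.
Qed.

Lemma contract2_11 m n (X Y Z : 'M[C]_(m, n)) a1 a2 :
  contract2 true true X Y Z a1 a2 = frob Y X * Z a1 a2.
Proof.
rewrite /contract2 /frob /mxtrace mulr_suml exchange_big; apply: eq_bigr => b1 _.
rewrite mxE mulr_suml; apply: eq_bigr => b2 _.
by rewrite /adjmx mxE /=; ring.
Qed.

Lemma contract4_mxtensor i1 i2 i3 i4 (X Y Z : 'M[C]_(d1, d2))
    (X' Y' Z' : 'M[C]_(d3, d4)) a1 a2 a3 a4 :
  contract4 i1 i2 i3 i4 (mxtensor X X') (mxtensor Y Y') (mxtensor Z Z') a1 a2 a3 a4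
  = contract2 i1 i2 X Y Z a1 a2 * contract2 i3 i4 X' Y' Z' a3 a4.
Proof.
rewrite -sum4_mul; do 4 (apply: eq_bigr => ? _).
by rewrite /mxtensor rmorphM; ring.
Qed.

Lemma contract4_centroidl N i1 i2 i3 i4 (T : 'I_N -> tensor4) (Y Z : tensor4)
    a1 a2 a3 a4 :
  contract4 i1 i2 i3 i4 (centroid T) Y Z a1 a2 a3 a4
  = N%:R^-1 * \sum_(k < N) contract4 i1 i2 i3 i4 (T k) Y Z a1 a2 a3 a4.
Proof.
rewrite /contract4 /centroid sum4_pair.
under [in RHS]eq_bigr do rewrite sum4_pair.
rewrite exchange_big mulr_sumr; apply: eq_bigr => b _.
by rewrite -!mulrA mulr_suml; congr (_ * _); apply: eq_bigr => k _; rewrite mulrA.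
Qed.

Lemma contract4_centroidm N i1 i2 i3 i4 (X : tensor4) (T : 'I_N -> tensor4)
    (Z : tensor4) a1 a2 a3 a4 :
  contract4 i1 i2 i3 i4 X (centroid T) Z a1 a2 a3 a4
  = N%:R^-1 * \sum_(k < N) contract4 i1 i2 i3 i4 X (T k) Z a1 a2 a3 a4.
Proof.
rewrite /contract4 /centroid sum4_pair.
under [in RHS]eq_bigr do rewrite sum4_pair.
rewrite exchange_big mulr_sumr; apply: eq_bigr => b _.
rewrite rmorphM fmorphV rmorph_nat rmorph_sum mulrCA -!mulrA; congr (_ * _).
rewrite mulr_suml mulr_sumr; apply: eq_bigr => k _; ring.
Qed.

Lemma lohe_rhsE N (A : 'I_N -> tensor8 R d1 d2 d3 d4) kappa
    (T : 'I_N -> tensor4) j a1 a2 a3 a4 :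
  lohe_rhs A kappa T j a1 a2 a3 a4 =
  \sum_(b1 < d1) \sum_(b2 < d2) \sum_(b3 < d3) \sum_(b4 < d4)
     A j a1 a2 a3 a4 b1 b2 b3 b4 * T j b1 b2 b3 b4
  + \sum_(i1 : bool) \sum_(i2 : bool) \sum_(i3 : bool) \sum_(i4 : bool)
     ((kappa i1 i2 i3 i4)%:C)%C *
     (contract4 i1 i2 i3 i4 (centroid T) (T j) (T j) a1 a2 a3 a4
      - contract4 i1 i2 i3 i4 (T j) (centroid T) (T j) a1 a2 a3 a4).
Proof.
congr (_ + _); do 4 (apply: eq_bigr => ? _); congr (_ * _).
by rewrite /contract4 !sum4_pair -sumrB.
Qed.

Lemma sum_dmm_kappa (k1 k2 : R) (G : bool -> bool -> bool -> bool -> C) :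
  \sum_(i1 : bool) \sum_(i2 : bool) \sum_(i3 : bool) \sum_(i4 : bool)
     ((dmm_kappa k1 k2 i1 i2 i3 i4)%:C)%C * G i1 i2 i3 i4
  = (k1%:C)%C * (G false true true true + G true true false true)
    + (k2%:C)%C * (G true false true true + G true true true false).
Proof. by rewrite !big_bool /=; ring. Qed.

Lemma free_flow_mxtensor (B : 'I_d1 -> 'I_d2 -> 'I_d1 -> 'I_d2 -> C)
    (Cj : 'I_d3 -> 'I_d4 -> 'I_d3 -> 'I_d4 -> C)
    (U : 'M[C]_(d1, d2)) (V : 'M[C]_(d3, d4)) a1 a2 a3 a4 :
  \sum_(b1 < d1) \sum_(b2 < d2) \sum_(b3 < d3) \sum_(b4 < d4)
     free_flow B Cj a1 a2 a3 a4 b1 b2 b3 b4 * mxtensor U V b1 b2 b3 b4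
  = tapp B U a1 a2 * V a3 a4 + U a1 a2 * tapp Cj V a3 a4.
Proof.
transitivity (\sum_(b1 < d1) \sum_(b2 < d2) \sum_(b3 < d3) \sum_(b4 < d4)
   (B a1 a2 b1 b2 * U b1 b2 * ((a3 == b3)%:R * ((a4 == b4)%:R * V b3 b4))
    + (a1 == b1)%:R * ((a2 == b2)%:R * U b1 b2) * (Cj a3 a4 b3 b4 * V b3 b4))).
  by do 4 (apply: eq_bigr => ? _); rewrite /free_flow /mxtensor; ring.
by rewrite sum4D !sum4_mul !sum_delta2 !mxE.
Qed.

Lemma addmx_scale_mxE m n (T S S' : 'M[C]_(m, n)) c c' a b :
  (T + c *: S + c' *: S') a b = T a b + c * S a b + c' * S' a b.
Proof. by rewrite !mxE. Qed.

Lemma lincomb_mxE N m n (c c' : 'I_N -> C) (M M' : 'I_N -> 'M[C]_(m, n)) a b :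
  (\sum_(k < N) (c k *: M k - c' k *: M' k)) a b
  = \sum_(k < N) (c k * M k a b - c' k * M' k a b).
Proof. by elim/big_rec2: _ => [|k x S _ <-]; rewrite !mxE. Qed.

Lemma dmm_rhsE N m n p q (B : 'I_N -> 'I_m -> 'I_n -> 'I_m -> 'I_n -> C)
    (k1 k2 : R) (X : 'I_N -> 'M[C]_(m, n)) (Y : 'I_N -> 'M[C]_(p, q)) j a b :
  dmm_rhs B k1 k2 X Y j a b =
  tapp (B j) (X j) a b
  + (k1%:C)%C / N%:R * \sum_(k < N)
      (frob (Y j) (Y k) * contract2 false true (X k) (X j) (X j) a b
       - frob (Y k) (Y j) * contract2 false true (X j) (X k) (X j) a b)
  + (k2%:C)%C / N%:R * \sum_(k < N)
      (frob (Y j) (Y k) * contract2 true false (X k) (X j) (X j) a b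
       - frob (Y k) (Y j) * contract2 true false (X j) (X k) (X j) a b).
Proof.
rewrite /dmm_rhs addmx_scale_mxE !lincomb_mxE; congr (_ + _ * _ + _ * _);
  by apply: eq_bigr => k _; rewrite ?contract2_01 ?contract2_10.
Qed.

Section ProductTensors.
Variables (N : nat) (U : 'I_N -> 'M[C]_(d1, d2)) (V : 'I_N -> 'M[C]_(d3, d4)).
Local Notation T := (fun k => mxtensor (U k) (V k)).

Lemma coupling_mxtensor j i1 i2 i3 i4 a1 a2 a3 a4 :
  contract4 i1 i2 i3 i4 (centroid T) (T j) (T j) a1 a2 a3 a4
  - contract4 i1 i2 i3 i4 (T j) (centroid T) (T j) a1 a2 a3 a4
  = N%:R^-1 * \sum_(k < N)
      (contract2 i1 i2 (U k) (U j) (U j) a1 a2 * contract2 i3 i4 (V k) (V j) (V j) a3 a4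
       - contract2 i1 i2 (U j) (U k) (U j) a1 a2 * contract2 i3 i4 (V j) (V k) (V j) a3 a4).
Proof.
rewrite contract4_centroidl contract4_centroidm -mulrBr -sumrB.
by under eq_bigr do rewrite !contract4_mxtensor.
Qed.

Lemma coupling_mxtensor_left j i1 i2 a1 a2 a3 a4 :
  contract4 i1 i2 true true (centroid T) (T j) (T j) a1 a2 a3 a4
  - contract4 i1 i2 true true (T j) (centroid T) (T j) a1 a2 a3 a4
  = N%:R^-1 * (\sum_(k < N)
      (frob (V j) (V k) * contract2 i1 i2 (U k) (U j) (U j) a1 a2
       - frob (V k) (V j) * contract2 i1 i2 (U j) (U k) (U j) a1 a2)) * V j a3 a4.
Proof.
rewrite coupling_mxtensor -mulrA mulr_suml; congr (_ * _).
by apply: eq_bigr => k _; rewrite !contract2_11; ring.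
Qed.

Lemma coupling_mxtensor_right j i3 i4 a1 a2 a3 a4 :
  contract4 true true i3 i4 (centroid T) (T j) (T j) a1 a2 a3 a4
  - contract4 true true i3 i4 (T j) (centroid T) (T j) a1 a2 a3 a4
  = U j a1 a2 * (N%:R^-1 * \sum_(k < N)
      (frob (U j) (U k) * contract2 i3 i4 (V k) (V j) (V j) a3 a4
       - frob (U k) (U j) * contract2 i3 i4 (V j) (V k) (V j) a3 a4)).
Proof.
rewrite coupling_mxtensor [RHS]mulrCA; congr (_ * _); rewrite mulr_sumr.
by apply: eq_bigr => k _; rewrite !contract2_11; ring.
Qed.

Lemma lohe_rhs_mxtensor (k1 k2 : R)
    (B : 'I_N -> 'I_d1 -> 'I_d2 -> 'I_d1 -> 'I_d2 -> C)
    (Cj : 'I_N -> 'I_d3 -> 'I_d4 -> 'I_d3 -> 'I_d4 -> C) j a1 a2 a3 a4 :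
  lohe_rhs (fun j => free_flow (B j) (Cj j)) (dmm_kappa k1 k2) T j a1 a2 a3 a4
  = dmm_rhs B k1 k2 U V j a1 a2 * V j a3 a4
    + U j a1 a2 * dmm_rhs Cj k1 k2 V U j a3 a4.
Proof.
rewrite lohe_rhsE sum_dmm_kappa free_flow_mxtensor !coupling_mxtensor_left.
by rewrite !coupling_mxtensor_right !dmm_rhsE; ring.
Qed.

End ProductTensors.

End TensorAlgebra.

(** * Complex-valued trajectories *)

Section ComplexTrajectories.
Variable R : realType.
Local Notation C := R[i].
Implicit Types f g : R -> C.

Lemma is_derive_big (I : Type) (r : seq I) (h : I -> R -> R) (dh : I -> R) (t : R) :
  (forall i, is_derive t 1 (h i) (dh i)) ->
  is_derive t 1 (fun s => \sum_(i <- r) h i s) (\sum_(i <- r) dh i).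
Proof.
move=> hd; elim: r => [|i r IH].
  by under eq_fun do rewrite big_nil; rewrite big_nil; exact: is_derive_cst.
under eq_fun do rewrite big_cons; rewrite big_cons; exact: is_deriveD.
Qed.

Lemma cderivB f g (t : R) df dg :
  cderiv f t df -> cderiv g t dg -> cderiv (fun s => f s - g s) t (df - dg).
Proof.
move=> [fr fi] [gr gi]; split.
  by under eq_fun do rewrite raddfB; rewrite raddfB; exact: is_deriveB.
by under eq_fun do rewrite raddfB; rewrite raddfB; exact: is_deriveB.
Qed.

Lemma cderivM f g (t : R) df dg :
  cderiv f t df -> cderiv g t dg ->
  cderiv (fun s => f s * g s) t (df * g t + f t * dg).
Proof.
move=> [fr fi] [gr gi]; split.
  under eq_fun do rewrite ReM.
  apply: is_derive_eq (is_deriveB (is_deriveM fr gr) (is_deriveM fi gi)) _.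
  by rewrite ReD !ReM /GRing.scale /=; ring.
under eq_fun do rewrite ImM.
apply: is_derive_eq (is_deriveD (is_deriveM fr gi) (is_deriveM fi gr)) _.
by rewrite ImD !ImM /GRing.scale /=; ring.
Qed.

Lemma ccont0M f g : ccont0 f -> ccont0 g -> ccont0 (fun s => f s * g s).
Proof.
move=> [fr fi] [gr gi]; split.
  by under eq_fun do rewrite ReM; rewrite ReM; exact: cvgB (cvgM fr gr) (cvgM fi gi).
by under eq_fun do rewrite ImM; rewrite ImM; exact: cvgD (cvgM fr gi) (cvgM fi gr).
Qed.

Lemma is_derive_sqrnormc f (t : R) df :
  cderiv f t df ->
  is_derive t 1 (fun s => sqrnormc (f s)) (2 * complex.Re (Num.conj (f t) * df)).
Proof.
move=> [fr fi]; rewrite /sqrnormc; under eq_fun do rewrite !expr2.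
apply: is_derive_eq (is_deriveD (is_deriveM fr fr) (is_deriveM fi fi)) _.
by rewrite Re_conjM /GRing.scale /=; ring.
Qed.

Definition ccontinuous_on (A : set R) f :=
  {within A, continuous (fun s => complex.Re (f s))} /\
  {within A, continuous (fun s => complex.Im (f s))}.

Lemma is_derive_continuous (h : R -> R) (t d : R) :
  is_derive t 1 h d -> {for t, continuous h}.
Proof. by case=> dh _; exact/differentiable_continuous/derivable1_diffP. Qed.

Lemma ccont0_continuous_itv f f' (t : R) :
  0 < t -> ccont0 f -> (forall s, 0 < s -> cderiv f s (f' s)) ->
  ccontinuous_on `[0, t] f.
Proof.
move=> t_gt0 [Re0 Im0] df.
have part_cont (part : C -> R) : part (f x) @[x --> 0^'+] --> part (f 0) ->
    (forall s, 0 < s -> {for s, continuous (fun s => part (f s))}) ->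
    {within `[0, t], continuous (fun s => part (f s))}.
  move=> part0 partc; apply/continuous_within_itvP => //; split => //.
    by move=> s; rewrite in_itv /= => /andP[s_gt0 _]; exact: partc.
  exact/cvg_at_left_filter/partc.
split; apply: part_cont => // s s_gt0; have [dRe dIm] := df s s_gt0.
  exact: is_derive_continuous dRe.
exact: is_derive_continuous dIm.
Qed.

Lemma ccontinuous_onB (A : set R) f g :
  ccontinuous_on A f -> ccontinuous_on A g -> ccontinuous_on A (fun s => f s - g s).
Proof.
move=> [fRe fIm] [gRe gIm]; split => s.
  by under eq_fun do rewrite raddfB; exact: cvgB (fRe s) (gRe s).
by under eq_fun do rewrite raddfB; exact: cvgB (fIm s) (gIm s).
Qed.

Lemma continuous_on_sqrnormc (A : set R) f :
  ccontinuous_on A f -> {within A, continuous (fun s => sqrnormc (f s))}.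
Proof.
move=> [fRe fIm] s; rewrite /sqrnormc; under eq_fun do rewrite !expr2.
exact: cvgD (cvgM (fRe s) (fRe s)) (cvgM (fIm s) (fIm s)).
Qed.

Lemma continuous_on_big (A : set R) (I : Type) (r : seq I) (h : I -> R -> R) :
  (forall i, {within A, continuous (h i)}) ->
  {within A, continuous (fun s => \sum_(i <- r) h i s)}.
Proof.
move=> hc; elim: r => [|i r IH] s.
  by under eq_fun do rewrite big_nil; exact: cvg_cst.
by under eq_fun do rewrite big_cons; exact: cvgD (hc i s) (IH s).
Qed.

Lemma continuous_on_normc1 (A : set R) f :
  ccontinuous_on A f -> {within A, continuous (fun s => normc1 (f s))}.
Proof. by move=> [fRe fIm] s; exact: cvgD (cvg_norm (fRe s)) (cvg_norm (fIm s)). Qed.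

End ComplexTrajectories.

Lemma mxtensor_lohe_solution (R : realType) N d1 d2 d3 d4 (k1 k2 : R)
    (B : 'I_N -> 'I_d1 -> 'I_d2 -> 'I_d1 -> 'I_d2 -> R[i])
    (Cj : 'I_N -> 'I_d3 -> 'I_d4 -> 'I_d3 -> 'I_d4 -> R[i])
    (U : 'I_N -> R -> 'M[R[i]]_(d1, d2)) (V : 'I_N -> R -> 'M[R[i]]_(d3, d4)) :
  dmm_solution B Cj k1 k2 U V ->
  lohe_solution (fun j => free_flow (B j) (Cj j)) (dmm_kappa k1 k2)
    (fun j t => mxtensor (U j t) (V j t)).
Proof.
move=> [solU solV] j a1 a2 a3 a4.
have [U0 dU] := solU j a1 a2; have [V0 dV] := solV j a3 a4.
split=> [|t t_gt0]; first exact: ccont0M.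
by rewrite lohe_rhs_mxtensor; exact: cderivM (dU t t_gt0) (dV t t_gt0).
Qed.

(** * Uniqueness for locally Lipschitz systems *)

Lemma ler_sum_term (R : numDomainType) (I : finType) (F : I -> R) i :
  (forall j, 0 <= F j) -> F i <= \sum_j F j.
Proof. by move=> F_ge0; rewrite (bigD1 i) //= lerDl sumr_ge0. Qed.

Lemma sqr_sum_le (R : realDomainType) (I : finType) (c : I -> R) :
  (\sum_i c i) ^+ 2 <= #|I|%:R * \sum_i c i ^+ 2.
Proof.
have lhsE : 2 * (\sum_i c i) ^+ 2 = \sum_i \sum_j 2 * (c i * c j).
  by rewrite expr2 big_distrlr mulr_sumr; under eq_bigr do rewrite mulr_sumr.
have rhsE : 2 * (#|I|%:R * \sum_i c i ^+ 2) = \sum_i \sum_j (c i ^+ 2 + c j ^+ 2).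
  under [RHS]eq_bigr do rewrite big_split /= sumr_const -mulr_natl.
  by rewrite big_split /= -mulr_sumr sumr_const -mulr_natl; ring.
rewrite -(@ler_pM2l _ 2) // lhsE rhsE; apply: ler_sum => i _; apply: ler_sum => j _.
by have := sqr_ge0 (c i - c j); nra.
Qed.

Section LocallyLipschitz.
Variables (R : realType) (I : finType).
Local Notation C := R[i].
Implicit Types f g : (I -> C) -> C.

Definition locally_lipschitz f :=
  forall M, 0 <= M -> exists2 L, 0 <= L &
    forall x y, (forall i, normc1 (x i) <= M) -> (forall i, normc1 (y i) <= M) ->
      normc1 (f x - f y) <= L * \sum_i normc1 (x i - y i).

Lemma locally_lipschitz_cst c : locally_lipschitz (fun _ => c).
Proof. by move=> M _; exists 0 => // x y _ _; rewrite subrr normc1_0 mul0r. Qed.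

Lemma locally_lipschitz_coord i : locally_lipschitz (fun x => x i).
Proof.
move=> M _; exists 1 => // x y _ _; rewrite mul1r.
by apply: ler_sum_term => j; exact: normc1_ge0.
Qed.

Lemma locally_lipschitz_bounded f M :
  locally_lipschitz f -> 0 <= M ->
  exists2 K, 0 <= K & forall x, (forall i, normc1 (x i) <= M) -> normc1 (f x) <= K.
Proof.
move=> Lf M_ge0; have [L L_ge0 HL] := Lf M M_ge0.
have bnd0 (i : I) : normc1 ((fun=> 0) i : C) <= M by rewrite normc1_0.
exists (L * (#|I|%:R * M) + normc1 (f (fun=> 0))).
  by rewrite addr_ge0 ?normc1_ge0 // !mulr_ge0.
move=> x bndx; rewrite -[f x](subrK (f (fun=> 0))).
apply: (le_trans (normc1D _ _)); rewrite lerD2r.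
apply: le_trans (HL x (fun=> 0) bndx bnd0) _; rewrite ler_wpM2l //.
rewrite -sum1_card natr_sum mulr_suml; apply: ler_sum => i _.
by rewrite subr0 mul1r.
Qed.

Lemma locally_lipschitzD f g :
  locally_lipschitz f -> locally_lipschitz g -> locally_lipschitz (fun x => f x + g x).
Proof.
move=> Lf Lg M M_ge0; have [L1 L1_ge0 H1] := Lf M M_ge0; have [L2 L2_ge0 H2] := Lg M M_ge0.
exists (L1 + L2) => [|x y bx by_]; first exact: addr_ge0.
rewrite opprD addrACA mulrDl; apply: le_trans (normc1D _ _) _.
exact: lerD (H1 x y bx by_) (H2 x y bx by_).
Qed.

Lemma locally_lipschitzN f : locally_lipschitz f -> locally_lipschitz (fun x => - f x).
Proof.
move=> Lf M M_ge0; have [L L_ge0 HL] := Lf M M_ge0.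
by exists L => // x y bx by_; rewrite -opprD normc1N; exact: HL.
Qed.

Lemma locally_lipschitzM f g :
  locally_lipschitz f -> locally_lipschitz g -> locally_lipschitz (fun x => f x * g x).
Proof.
move=> Lf Lg M M_ge0; have [L1 L1_ge0 H1] := Lf M M_ge0; have [L2 L2_ge0 H2] := Lg M M_ge0.
have [Kf Kf_ge0 bf] := locally_lipschitz_bounded Lf M_ge0.
have [Kg Kg_ge0 bg] := locally_lipschitz_bounded Lg M_ge0.
exists (Kf * L2 + L1 * Kg) => [|x y bx by_]; first by rewrite addr_ge0 ?mulr_ge0.
set S := \sum_i _; have S_ge0 : 0 <= S by rewrite sumr_ge0 // => i _; exact: normc1_ge0.
have -> : f x * g x - f y * g y = f x * (g x - g y) + (f x - f y) * g y by ring.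
have -> : (Kf * L2 + L1 * Kg) * S = Kf * (L2 * S) + (L1 * S) * Kg by ring.
apply: le_trans (normc1D _ _) _; apply: lerD; apply: le_trans (normc1M _ _) _.
  by apply: ler_pM; rewrite ?normc1_ge0 ?bf ?H2.
by apply: ler_pM; rewrite ?normc1_ge0 ?bg ?H1.
Qed.

Lemma locally_lipschitz_conj f :
  locally_lipschitz f -> locally_lipschitz (fun x => Num.conj (f x)).
Proof.
move=> Lf M M_ge0; have [L L_ge0 HL] := Lf M M_ge0.
by exists L => // x y bx by_; rewrite -rmorphB normc1_conj; exact: HL.
Qed.

Lemma locally_lipschitz_sum (J : Type) (r : seq J) (P : pred J) (F : (I -> C) -> J -> C) :
  (forall j, locally_lipschitz (fun x => F x j)) ->
  locally_lipschitz (fun x => \sum_(j <- r | P j) F x j).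
Proof.
move=> LF; elim: r => [|j r IH].
  by under eq_fun do rewrite big_nil; exact: locally_lipschitz_cst.
under eq_fun do rewrite big_cons; case: (P j) => //.
exact: locally_lipschitzD.
Qed.

Lemma locally_lipschitz_uniform (F : (I -> C) -> I -> C) M :
  (forall i, locally_lipschitz (fun x => F x i)) -> 0 <= M ->
  exists2 L, 0 <= L & forall x y,
    (forall i, normc1 (x i) <= M) -> (forall i, normc1 (y i) <= M) ->
    forall i, normc1 (F x i - F y i) <= L * \sum_i normc1 (x i - y i).
Proof.
move=> LF M_ge0.
have /choice[Li HLi] : forall i, exists L, 0 <= L /\ forall x y,
    (forall i, normc1 (x i) <= M) -> (forall i, normc1 (y i) <= M) ->
    normc1 (F x i - F y i) <= L * \sum_i normc1 (x i - y i).
  by move=> i; have [L L_ge0 HL] := LF i M M_ge0; exists L.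
have Li_ge0 i : 0 <= Li i by case: (HLi i).
exists (\sum_i Li i) => [|x y bx by_ i]; first exact: sumr_ge0.
apply: le_trans ((HLi i).2 x y bx by_) _; apply: ler_wpM2r.
  by rewrite sumr_ge0 // => j _; exact: normc1_ge0.
exact: ler_sum_term.
Qed.

End LocallyLipschitz.

Section Gronwall.
Variable R : realType.

Lemma is_derive0_itv_eq (f : R -> R) (t : R) :
  0 < t -> {within `[0, t], continuous f} ->
  (forall s, 0 < s < t -> is_derive s 1 f 0) -> f t = f 0.
Proof.
move=> t_gt0 fc df.
have fd s : s \in `]0, t[%R -> derivable f s 1 by rewrite in_itv /= => /df [].
have f'0 s : s \in `]0, t[%R -> f^`() s = 0.
  by rewrite in_itv /= => /df ds; rewrite derive1E; apply: derive_val.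
apply/eqP; rewrite eq_le; apply/andP; split.
  by apply: (ler0_derive1_nincr fd _ fc); rewrite ?lexx ?ltW // => s /f'0 ->.
by apply: (ger0_derive1_ndecr fd _ fc); rewrite ?lexx ?ltW // => s /f'0 ->.
Qed.

Lemma gronwall_eq0 (D D' : R -> R) (K t : R) :
  0 < t -> {within `[0, t], continuous D} ->
  (forall s, 0 < s < t -> is_derive s 1 D (D' s)) ->
  (forall s, 0 < s < t -> D' s <= K * D s) ->
  D 0 = 0 -> 0 <= D t -> D t = 0.
Proof.
move=> t_gt0 Dc dD D'_le D0 Dt_ge0.
(* E = D exp(-K s) is nonincreasing, nonnegative at t and zero at 0. *)
pose E s := D s * expR (- (K * s)).
have dexp (s : R) : is_derive s 1 (fun s => expR (- (K * s))) (expR (- (K * s)) * - K).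
  apply: is_derive1_comp.
  apply: is_derive_eq (is_deriveN (is_deriveZ K (is_derive_id s 1))) _.
  by rewrite /GRing.scale /= mulr1.
have dE (s : R) : 0 < s < t -> is_derive s 1 E (expR (- (K * s)) * (D' s - K * D s)).
  move=> /dD ds; apply: is_derive_eq (is_deriveM ds (dexp s)) _.
  by rewrite /GRing.scale /=; ring.
have Ec : {within `[0, t], continuous E}.
  move=> s; apply: cvgM (Dc s) _; apply: continuous_subspaceT => x.
  exact: is_derive_continuous (dexp x).
have : E t <= E 0.
  apply: (ler0_derive1_nincr _ _ Ec); rewrite ?lexx ?ltW //.
    by move=> s; rewrite in_itv /= => /dE [].
  move=> s; rewrite in_itv /= => s_in.
  rewrite derive1E (@derive_val _ _ _ _ _ _ _ (dE s s_in)).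
  by rewrite mulr_ge0_le0 ?expR_ge0 // subr_le0 D'_le.
rewrite /E D0 mul0r pmulr_lle0 ?expR_gt0 // => Dt_le0.
by apply/eqP; rewrite eq_le Dt_le0 Dt_ge0.
Qed.

End Gronwall.

Section OdeUniqueness.
Variables (R : realType) (I : finType).
Local Notation C := R[i].
Variable F : (I -> C) -> I -> C.

Definition ode_solution (x : R -> I -> C) :=
  forall i, ccont0 (fun s => x s i) /\
    forall s, 0 < s -> cderiv (fun s => x s i) s (F (x s) i).

Lemma ode_solution_bounded x (t : R) :
  0 < t -> ode_solution x ->
  exists2 M, 0 <= M & forall s, s \in `[0, t]%R -> forall i, normc1 (x s i) <= M.
Proof.
move=> t_gt0 solx; pose g s := \sum_i normc1 (x s i).
have gc : {within `[0, t], continuous g}.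
  apply: continuous_on_big => i; apply: continuous_on_normc1.
  by have [x0 dx] := solx i; exact: ccont0_continuous_itv x0 dx.
have [c _ gmax] := EVT_max (ltW t_gt0) gc.
exists (g c) => [|s s_in i]; first by rewrite sumr_ge0 // => i _; exact: normc1_ge0.
apply: le_trans (gmax s s_in); apply: ler_sum_term => j; exact: normc1_ge0.
Qed.

Lemma energy_estimate (w v : I -> C) (L : R) :
  0 <= L -> (forall i, normc1 (v i) <= L * \sum_j normc1 (w j)) ->
  \sum_i 2 * complex.Re (Num.conj (w i) * v i)
  <= 4 * L * #|I|%:R * \sum_i sqrnormc (w i).
Proof.
move=> L_ge0 bv; set S := \sum_j normc1 (w j).
have S_ge0 : 0 <= S by rewrite sumr_ge0 // => j _; exact: normc1_ge0.
apply: (@le_trans _ _ (\sum_i 2 * (normc1 (w i) * (L * S)))).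
  apply: ler_sum => i _; rewrite ler_wpM2l //.
  apply: le_trans (Re_conjM_le _ _) _.
  by rewrite ler_wpM2l ?normc1_ge0.
rewrite -mulr_sumr -mulr_suml -/S.
have -> : 2 * (S * (L * S)) = 2 * L * S ^+ 2 by ring.
have -> : 4 * L * #|I|%:R * \sum_i sqrnormc (w i)
          = 2 * L * (#|I|%:R * (2 * \sum_i sqrnormc (w i))) by ring.
apply: ler_wpM2l; first by rewrite mulr_ge0.
apply: le_trans (sqr_sum_le _) _; apply: ler_wpM2l => //.
by rewrite mulr_sumr; apply: ler_sum => i _; exact: sqr_normc1_le.
Qed.

Lemma ode_solution_unique x y (t : R) :
  (forall i, locally_lipschitz (fun z => F z i)) -> 0 < t ->
  ode_solution x -> ode_solution y -> x 0 = y 0 -> x t = y t.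
Proof.
move=> LF t_gt0 solx soly xy0.
have [Mx Mx_ge0 bx] := ode_solution_bounded t_gt0 solx.
have [My My_ge0 by_] := ode_solution_bounded t_gt0 soly.
have [L L_ge0 HL] := locally_lipschitz_uniform LF (addr_ge0 Mx_ge0 My_ge0).
pose D s := \sum_i sqrnormc (x s i - y s i).
pose D' s := \sum_i 2 * complex.Re (Num.conj (x s i - y s i) * (F (x s) i - F (y s) i)).
have D_t : D t = 0.
  apply: (@gronwall_eq0 _ D D' (4 * L * #|I|%:R)) => //.
  - apply: continuous_on_big => i; apply/continuous_on_sqrnormc/ccontinuous_onB.
      by have [x0 dx] := solx i; exact: ccont0_continuous_itv x0 dx.
    by have [y0 dy] := soly i; exact: ccont0_continuous_itv y0 dy.
  - move=> s /andP[s_gt0 _]; apply: is_derive_big => i.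
    apply: is_derive_sqrnormc; apply: cderivB.
      exact: (solx i).2.
    exact: (soly i).2.
  - move=> s /andP[s_gt0 s_lt]; apply: energy_estimate => // i.
    have s_in : s \in `[0, t]%R by rewrite in_itv /= !ltW.
    apply: HL => j.
      by apply: le_trans (bx s s_in j) _; rewrite lerDl.
    by apply: le_trans (by_ s s_in j) _; rewrite lerDr.
  - by rewrite /D xy0 big1 // => i _; apply/eqP; rewrite subrr sqrnormc_eq0.
  - by rewrite sumr_ge0 // => i _; exact: sqrnormc_ge0.
apply/funext => i; apply/eqP; rewrite -subr_eq0 -sqrnormc_eq0.
move/eqP: D_t; rewrite psumr_eq0 => [/allP/(_ i)|j _]; last exact: sqrnormc_ge0.
by rewrite mem_index_enum => /(_ isT).
Qed.

End OdeUniqueness.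

Ltac lipschitz_step := match goal with
  | |- locally_lipschitz (fun _ => ?c) => exact: (@locally_lipschitz_cst _ _ c)
  | |- locally_lipschitz (fun z => @?f z + @?g z) => apply: (@locally_lipschitzD _ _ f g)
  | |- locally_lipschitz (fun z => - @?f z) => apply: (@locally_lipschitzN _ _ f)
  | |- locally_lipschitz (fun z => @?f z * @?g z) => apply: (@locally_lipschitzM _ _ f g)
  | |- locally_lipschitz (fun z => Num.conj (@?f z)) =>
      apply: (@locally_lipschitz_conj _ _ f)
  | |- locally_lipschitz (fun z => \big[+%R/0]_(j <- ?r | @?P j) @?F z j) =>
      apply: (@locally_lipschitz_sum _ _ _ r P F) => ?
  | |- locally_lipschitz (fun z => z ?i) => exact: (@locally_lipschitz_coord _ _ i)
  end.

Section LoheUniqueness.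
Variable R : realType.
Local Notation C := R[i].
Variables N d1 d2 d3 d4 : nat.
Local Notation I := ('I_N * 'I_d1 * 'I_d2 * 'I_d3 * 'I_d4)%type.
Variables (A : 'I_N -> tensor8 R d1 d2 d3 d4) (kappa : bool -> bool -> bool -> bool -> R).

Definition tensors_of (z : I -> C) : 'I_N -> tensor4 R d1 d2 d3 d4 :=
  fun k b1 b2 b3 b4 => z (k, b1, b2, b3, b4).

Definition lohe_field (z : I -> C) (i : I) : C :=
  let: (k, a1, a2, a3, a4) := i in lohe_rhs A kappa (tensors_of z) k a1 a2 a3 a4.

Lemma locally_lipschitz_lohe i : locally_lipschitz (fun z => lohe_field z i).
Proof.
by case: i => [[[[k a1] a2] a3] a4]; rewrite /lohe_field /lohe_rhs /tensors_of;
  cbv zeta; repeat lipschitz_step.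
Qed.

Lemma lohe_solution_unique (T T' : 'I_N -> R -> tensor4 R d1 d2 d3 d4) :
  lohe_solution A kappa T -> lohe_solution A kappa T' ->
  (forall j, T j 0 = T' j 0) -> forall j (t : R), 0 < t -> T j t = T' j t.
Proof.
move=> solT solT' T0 j t t_gt0.
pose flat (T : 'I_N -> R -> tensor4 R d1 d2 d3 d4) s (i : I) :=
  let: (k, b1, b2, b3, b4) := i in T k s b1 b2 b3 b4.
have flat_sol T1 : lohe_solution A kappa T1 -> ode_solution lohe_field (flat T1).
  by move=> solT1 [[[[k a1] a2] a3] a4]; exact: solT1.
have flat_eq : flat T t = flat T' t.
  apply: ode_solution_unique locally_lipschitz_lohe t_gt0 (flat_sol _ solT)
    (flat_sol _ solT') _.
  by apply/funext => -[[[[k a1] a2] a3] a4]; rewrite /= T0.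
exact: (congr1 (fun z a1 a2 a3 a4 => z (j, a1, a2, a3, a4)) flat_eq).
Qed.

End LoheUniqueness.

(** * Conservation of the Frobenius norms *)

Section FrobeniusNorm.
Variable R : realType.
Local Notation C := R[i].

Definition skew_hermitian m n (B : 'I_m -> 'I_n -> 'I_m -> 'I_n -> C) :=
  forall a b c d, B a b c d = - Num.conj (B c d a b).

Lemma frobE m n (X Y : 'M[C]_(m, n)) :
  frob X Y = \sum_(a < m) \sum_(b < n) Num.conj (X a b) * Y a b.
Proof.
rewrite /frob /mxtrace exchange_big; apply: eq_bigr => b _; rewrite mxE.
by apply: eq_bigr => a _; rewrite mxE.
Qed.

Lemma frob_conj m n (X Y : 'M[C]_(m, n)) : Num.conj (frob X Y) = frob Y X.
Proof.
rewrite !frobE rmorph_sum; apply: eq_bigr => a _; rewrite rmorph_sum.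
by apply: eq_bigr => b _; rewrite rmorphM /= conjCK mulrC.
Qed.

Lemma Re_frob_sqrnormc m n (X : 'M[C]_(m, n)) :
  complex.Re (frob X X) = \sum_(a < m) \sum_(b < n) sqrnormc (X a b).
Proof.
rewrite frobE raddf_sum; apply: eq_bigr => a _; rewrite raddf_sum.
by apply: eq_bigr => b _; rewrite sqrnormcE.
Qed.

Lemma Re_conjN_eq0 (w : C) : Num.conj w = - w -> complex.Re w = 0.
Proof. by case: w => a b [] /eqP; rewrite -subr_eq0 opprK -mulr2n mulrn_eq0 => /eqP. Qed.

Lemma frobD m n (X Y Z : 'M[C]_(m, n)) : frob X (Y + Z) = frob X Y + frob X Z.
Proof. by rewrite /frob mulmxDr mxtraceD. Qed.

Lemma frobB m n (X Y Z : 'M[C]_(m, n)) : frob X (Y - Z) = frob X Y - frob X Z.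
Proof. by rewrite /frob mulmxBr raddfB. Qed.

Lemma frobZ m n (X Y : 'M[C]_(m, n)) c : frob X (c *: Y) = c * frob X Y.
Proof. by rewrite /frob -scalemxAr mxtraceZ. Qed.

Lemma frob_sum m n (X : 'M[C]_(m, n)) (J : finType) (Y : J -> 'M[C]_(m, n)) :
  frob X (\sum_k Y k) = \sum_k frob X (Y k).
Proof. by rewrite /frob mulmx_sumr raddf_sum. Qed.

Lemma adjmxK m n (X : 'M[C]_(m, n)) : adjmx (adjmx X) = X.
Proof. by apply/matrixP => a b; rewrite !mxE conjCK. Qed.

Lemma adjmxM m n p (X : 'M[C]_(m, n)) (Y : 'M[C]_(n, p)) :
  adjmx (X *m Y) = adjmx Y *m adjmx X.
Proof.
apply/matrixP => a b; rewrite !mxE rmorph_sum; apply: eq_bigr => c _.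
by rewrite !mxE rmorphM mulrC.
Qed.

Lemma Re_frob_tapp m n (B : 'I_m -> 'I_n -> 'I_m -> 'I_n -> C) (X : 'M[C]_(m, n)) :
  skew_hermitian B -> complex.Re (frob X (tapp B X)) = 0.
Proof.
move=> skewB; apply: Re_conjN_eq0.
have -> : frob X (tapp B X) = \sum_(a < m) \sum_(b < n) \sum_(c < m) \sum_(d < n)
    Num.conj (X a b) * B a b c d * X c d.
  rewrite frobE; apply: eq_bigr => a _; apply: eq_bigr => b _.
  rewrite mxE mulr_sumr; apply: eq_bigr => c _; rewrite mulr_sumr.
  by apply: eq_bigr => d _; rewrite mulrA.
rewrite [in RHS]sum4_swap !pair_bigA rmorph_sum -sumrN; apply: eq_bigr => i _.
by rewrite skewB !rmorphM rmorphN /= !conjCK; ring.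
Qed.

Lemma Re_frob_interaction N m n p q (X : 'M[C]_(m, n)) (Y : 'I_N -> 'M[C]_(p, q))
    (M M' : 'I_N -> 'M[C]_(m, n)) j :
  (forall k, frob X (M' k) = Num.conj (frob X (M k))) ->
  complex.Re (frob X (\sum_(k < N)
    (frob (Y j) (Y k) *: M k - frob (Y k) (Y j) *: M' k))) = 0.
Proof.
move=> MM'; rewrite frob_sum raddf_sum big1 // => k _.
rewrite frobB !frobZ MM' -(frob_conj (Y j) (Y k)) -rmorphM.
by case: (_ * _) => a b /=; rewrite subrr.
Qed.

Lemma Re_frob_real_comb m n (X T S S' : 'M[C]_(m, n)) (c c' : R) :
  complex.Re (frob X T) = 0 -> complex.Re (frob X S) = 0 ->
  complex.Re (frob X S') = 0 ->
  complex.Re (frob X (T + (c%:C)%C *: S + (c'%:C)%C *: S')) = 0.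
Proof.
by move=> XT XS XS'; rewrite !frobD !frobZ !ReD !Re_realM XT XS XS' !mulr0 !addr0.
Qed.

Lemma Re_frob_dmm_rhs N m n p q (B : 'I_N -> 'I_m -> 'I_n -> 'I_m -> 'I_n -> C)
    (k1 k2 : R) (X : 'I_N -> 'M[C]_(m, n)) (Y : 'I_N -> 'M[C]_(p, q)) j :
  skew_hermitian (B j) -> complex.Re (frob (X j) (dmm_rhs B k1 k2 X Y j)) = 0.
Proof.
move=> skewB; have realE (k : R) : (k%:C)%C / N%:R = ((k / N%:R)%:C)%C :> C.
  by rewrite fmorph_div rmorph_nat.
rewrite /dmm_rhs !realE; apply: Re_frob_real_comb; first exact: Re_frob_tapp.
  by apply: Re_frob_interaction => k; rewrite frob_conj /frob !adjmxM adjmxK !mulmxA.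
apply: Re_frob_interaction => k.
rewrite frob_conj /frob !adjmxM adjmxK !mulmxA.
by rewrite [LHS]mxtrace_mulC !mulmxA [LHS]mxtrace_mulC !mulmxA.
Qed.

Lemma Re_frobE m n (X Y : 'M[C]_(m, n)) :
  complex.Re (frob X Y)
  = \sum_(a < m) \sum_(b < n) complex.Re (Num.conj (X a b) * Y a b).
Proof. by rewrite frobE raddf_sum; under eq_bigr do rewrite raddf_sum. Qed.

Lemma dmm_frob_norm_const N d1 d2 d3 d4 (k1 k2 : R)
    (B : 'I_N -> 'I_d1 -> 'I_d2 -> 'I_d1 -> 'I_d2 -> C)
    (Cj : 'I_N -> 'I_d3 -> 'I_d4 -> 'I_d3 -> 'I_d4 -> C)
    (U : 'I_N -> R -> 'M[C]_(d1, d2)) (V : 'I_N -> R -> 'M[C]_(d3, d4)) j (t : R) :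
  skew_hermitian (B j) -> dmm_solution B Cj k1 k2 U V -> 0 < t ->
  frob_norm (U j t) = frob_norm (U j 0).
Proof.
move=> skewB [solU _] t_gt0; rewrite /frob_norm !Re_frob_sqrnormc.
congr Num.sqrt.
apply: (@is_derive0_itv_eq _ (fun s => \sum_a \sum_b sqrnormc (U j s a b)))
  => // [|s /andP[s_gt0 _]].
  apply: continuous_on_big => a; apply: continuous_on_big => b.
  apply: continuous_on_sqrnormc.
  by have [U0 dU] := solU j a b; exact: ccont0_continuous_itv U0 dU.
pose dU := dmm_rhs B k1 k2 (fun k => U k s) (fun k => V k s) j.
apply: (@is_derive_eq _ _ _ _ _ _ _ (2 * complex.Re (frob (U j s) dU))).
  rewrite Re_frobE mulr_sumr; apply: is_derive_big => a.
  rewrite mulr_sumr; apply: is_derive_big => b.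
  by apply: is_derive_sqrnormc; exact: (solU j a b).2.
by rewrite Re_frob_dmm_rhs ?mulr0.
Qed.

Lemma dmm_solution_sym N d1 d2 d3 d4 (k1 k2 : R)
    (B : 'I_N -> 'I_d1 -> 'I_d2 -> 'I_d1 -> 'I_d2 -> C)
    (Cj : 'I_N -> 'I_d3 -> 'I_d4 -> 'I_d3 -> 'I_d4 -> C)
    (U : 'I_N -> R -> 'M[C]_(d1, d2)) (V : 'I_N -> R -> 'M[C]_(d3, d4)) :
  dmm_solution B Cj k1 k2 U V -> dmm_solution Cj B k1 k2 V U.
Proof. by case. Qed.

End FrobeniusNorm.

Theorem proposition3p1 (R : realType) (N d1 d2 d3 d4 : nat) (k1 k2 : R)
  (B : 'I_N -> 'I_d1 -> 'I_d2 -> 'I_d1 -> 'I_d2 -> R[i])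
  (Cj : 'I_N -> 'I_d3 -> 'I_d4 -> 'I_d3 -> 'I_d4 -> R[i]) :
  (0 < N)%N -> (0 < d1)%N -> (0 < d2)%N -> (0 < d3)%N -> (0 < d4)%N ->
  0 <= k1 -> 0 <= k2 ->
  (forall j a1 b1 a2 b2, B j a1 b1 a2 b2 = - Num.conj (B j a2 b2 a1 b1)) ->
  (forall j g1 e1 g2 e2, Cj j g1 e1 g2 e2 = - Num.conj (Cj j g2 e2 g1 e1)) ->
  (* (1) *)
  (forall (U : 'I_N -> R -> 'M[R[i]]_(d1, d2))
          (V : 'I_N -> R -> 'M[R[i]]_(d3, d4)),
     dmm_solution B Cj k1 k2 U V ->
     lohe_solution (fun j => free_flow (B j) (Cj j)) (dmm_kappa k1 k2)
       (fun j t => mxtensor (U j t) (V j t)))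
  /\
  (* (2) *)
  (forall (T : 'I_N -> R -> tensor4 R d1 d2 d3 d4)
          (U0 : 'I_N -> 'M[R[i]]_(d1, d2)) (V0 : 'I_N -> 'M[R[i]]_(d3, d4))
          (U : 'I_N -> R -> 'M[R[i]]_(d1, d2))
          (V : 'I_N -> R -> 'M[R[i]]_(d3, d4)),
     lohe_solution (fun j => free_flow (B j) (Cj j)) (dmm_kappa k1 k2) T ->
     (forall j, T j 0 = mxtensor (U0 j) (V0 j)) ->
     (forall j, frob_norm (U0 j) = 1 /\ frob_norm (V0 j) = 1) ->
     dmm_solution B Cj k1 k2 U V ->
     (forall j, U j 0 = U0 j /\ V j 0 = V0 j) ->
     forall j (t : R), 0 < t ->
       T j t = mxtensor (U j t) (V j t) /\
       frob_norm (U j t) = 1 /\ frob_norm (V j t) = 1).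
Proof.
move=> _ _ _ _ _ _ _ skewB skewC.
split=> [U V|T U0 V0 U V solT T0 normUV0 solUV UV0 j t t_gt0].
  exact: mxtensor_lohe_solution.
split.
  apply: (lohe_solution_unique solT (mxtensor_lohe_solution solUV)) => // k.
  by rewrite T0 /= (UV0 k).1 (UV0 k).2.
rewrite (dmm_frob_norm_const (skewB j) solUV t_gt0).
rewrite (dmm_frob_norm_const (skewC j) (dmm_solution_sym solUV) t_gt0).
by rewrite (UV0 j).1 (UV0 j).2; exact: normUV0.
Qed.
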